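(* Let $(L,\le,\bot,\top)$ be a complete lattice and $(\&_i,\swarrow^i,\nwarrow_i)$, $i=1,\dots,n$, adjoint triples on $L$ with $x\,\&_i\,\top=\top\,\&_i\,x=x$ for all $x\in L$ and all $i$. Let $(A,B,R,\sigma)$ be a normalized context whose concept lattice $\mathcal{M}$ satisfies the ascending chain condition. If the context has a decomposition into independent subcontexts, then $\mathcal{M}$ has a decomposition into independent blocks. Specifically, if $\{(A_\lambda,B_\lambda,R_\lambda,\sigma_\lambda)\mid\lambda\in\Lambda\}$ is a decomposition into independent subcontexts, then the family $\{K_\lambda\}_{\lambda\in\Lambda}$ with $$K_\lambda=\{\langle g,f\rangle\in\mathcal{M}\mid\langle g,f\rangle=\textstyle\bigwedge M_g^{A_\lambda}\}\cup\{\langle g_\top,f_\bot\rangle,\langle g_\bot,f_\top\rangle\}$$ is a decomposition of $\mathcal{M}$ into independent blocks.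
   Context: An adjoint triple on $L$ is a triple of maps $\&,\swarrow,\nwarrow\colon L\times L\to L$ with $x\le z\swarrow y\iff x\& y\le z\iff y\le z\nwarrow x$. A context is $(A,B,R,\sigma)$ with $A,B$ non-empty, $R\colon A\times B\to L$, $\sigma\colon A\times B\to\{1,\dots,n\}$; normalized means every $a\in A$ has $b_1,b_2$ with $R(a,b_1)\ne\bot$, $R(a,b_2)=\bot$, and every $b\in B$ has $a_1,a_2$ with $R(a_1,b)\ne\bot$, $R(a_2,b)=\bot$. For $g\colon B\to L$, $f\colon A\to L$: $g^\uparrow(a)=\inf_{b}R(a,b)\swarrow^{\sigma(a,b)}g(b)$, $f^\downarrow(b)=\inf_{a}R(a,b)\nwarrow_{\sigma(a,b)}f(a)$. $\mathcal{M}$ is the complete lattice of pairs $\langle g,f\rangle$ with $g^\uparrow=f$, $f^\downarrow=g$, ordered by $g_1\le g_2$ pointwise; top $\langle g_\top,f_\bot\rangle$, bottom $\langle g_\bot,f_\top\rangle$ ($g_\top,g_\bot,f_\top,f_\bot$ constant maps). $\phi_{a,x}\colon A\to L$ takes value $x$ at $a$ and $\bot$ elsewhere. Meet-irreducible concepts (elements $c\ne$ top with $c=d\wedge e\Rightarrow c\in\{d,e\}$) all have the form $\langle\phi_{a,x}^\downarrow,\phi_{a,x}^{\downarrow\uparrow}\rangle$. For $A'\subseteq A$, $M_F^{A'}$ is the set of meet-irreducible concepts equal to $\langle\phi_{a,x}^\downarrow,\phi_{a,x}^{\downarrow\uparrow}\rangle$ for some $a\in A'$, $x\in L$, and $M_g^{A'}=\{c\in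 M_F^{A'}\mid\langle g,f\rangle\preceq c\}$. Separable subcontext: $(Y,X,R_{Y\times X},\sigma_{Y\times X})$ with $Y\subsetneq A$, $X\subsetneq B$ non-empty, some $R(a,b)\ne\bot$ with $a\in Y,b\in X$, $R=\bot$ on $Y\times(B\setminus X)$ and on $(A\setminus Y)\times X$. $\&$ has zero-divisors if $x\&y=\bot$ for some $x,y\ne\bot$. Decomposition into independent subcontexts: non-empty $\Lambda$, each $(A_\lambda,B_\lambda,R_\lambda,\sigma_\lambda)$ (restrictions) separable, $\{A_\lambda\}$ partitions $A$, $\{B_\lambda\}$ partitions $B$, and $\&_{\sigma(a,b)}$ has no zero-divisors whenever $(a,b)\in((A\setminus A_\lambda)\times B_\lambda)\cup(A_\lambda\times(B\setminus B_\lambda))$ for some $\lambda$. For a bounded lattice $(M,\preceq,\bot,\top)$, a block is a sublattice $K\subsetneq M$ with $K\setminus\{\bot,\top\}\ne\varnothing$ and $(\{x\mid k\preceq x\}\cup\{x\mid x\preceq k\})\setminus\{\bot,\top\}\subseteq K$ for all $k\in K\setminus\{\bot,\top\}$. Blocks $K_1,K_2$ are independent if $K_1\cap K_2\subseteq\{\bot,\top\}$. $M$ has a decomposition into independent blocks if there is a family of pairwise independent blocks whose union is $M$. *)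

From mathcomp Require Import ssreflect ssrfun ssrbool eqtype ssrnat fintype.

Set Implicit Arguments.
Unset Strict Implicit.
Unset Printing Implicit Defensive.

Record complete_lattice := CompleteLattice {
  cl_carrier :> Type;
  cl_le : cl_carrier -> cl_carrier -> Prop;
  cl_inf : (cl_carrier -> Prop) -> cl_carrier;
  cl_le_refl : forall x, cl_le x x;
  cl_le_trans : forall x y z, cl_le x y -> cl_le y z -> cl_le x z;
  cl_le_antisym : forall x y, cl_le x y -> cl_le y x -> x = y;
  cl_inf_lb : forall (S : cl_carrier -> Prop) x, S x -> cl_le (cl_inf S) x;
  cl_inf_glb : forall (S : cl_carrier -> Prop) y,
      (forall x, S x -> cl_le y x) -> cl_le y (cl_inf S)
}.

Definition cl_bot (L : complete_lattice) : L := cl_inf (fun _ : L => True).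
Definition cl_top (L : complete_lattice) : L := cl_inf (fun _ : L => False).

Definition infI (L : complete_lattice) (I : Type) (F : I -> L) : L :=
  cl_inf (fun y => exists i, y = F i).

Definition adjoint_triple (L : complete_lattice)
    (conj sw nw : L -> L -> L) : Prop :=
  forall x y z : L,
    (cl_le x (sw z y) <-> cl_le (conj x y) z) /\
    (cl_le (conj x y) z <-> cl_le y (nw z x)).

Definition has_zero_divisors (L : complete_lattice) (conj : L -> L -> L) :=
  exists x y : L, x <> cl_bot L /\ y <> cl_bot L /\ conj x y = cl_bot L.

Section Generic.
Variables (T : Type) (le : T -> T -> Prop) (M : T -> Prop).

Definition is_glb (S : T -> Prop) (c : T) : Prop :=
  M c /\ (forall x, S x -> le c x) /\
  (forall d, M d -> (forall x, S x -> le d x) -> le d c).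

Definition is_lub (S : T -> Prop) (c : T) : Prop :=
  M c /\ (forall x, S x -> le x c) /\
  (forall d, M d -> (forall x, S x -> le x d) -> le c d).

Definition pair_set (x y : T) : T -> Prop := fun z => z = x \/ z = y.

Definition sublattice (K : T -> Prop) : Prop :=
  (forall x, K x -> M x) /\
  (forall x y z, K x -> K y -> is_glb (pair_set x y) z -> K z) /\
  (forall x y z, K x -> K y -> is_lub (pair_set x y) z -> K z).

Variables (bot top : T).

Definition block (K : T -> Prop) : Prop :=
  sublattice K /\
  (exists x, M x /\ ~ K x) /\
  (exists k, K k /\ k <> bot /\ k <> top) /\
  (forall k, K k -> k <> bot -> k <> top ->
     forall x, M x -> (le k x \/ le x k) -> x <> bot -> x <> top -> K x).

Definition independent_blocks (K1 K2 : T -> Prop) : Prop :=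
  forall x, K1 x -> K2 x -> x = bot \/ x = top.

Definition decomposition_into_independent_blocks
    (I : Type) (K : I -> T -> Prop) : Prop :=
  (forall i, block (K i)) /\
  (forall i j, i <> j -> independent_blocks (K i) (K j)) /\
  (forall x, M x <-> exists i, K i x).

End Generic.

Section Contexts.
Variables (L : complete_lattice) (n : nat)
  (conj sw nw : 'I_n -> L -> L -> L)
  (A B : Type) (R : A -> B -> L) (sigma : A -> B -> 'I_n).

Definition normalized_context : Prop :=
  (forall a, (exists b1, R a b1 <> cl_bot L) /\ (exists b2, R a b2 = cl_bot L)) /\
  (forall b, (exists a1, R a1 b <> cl_bot L) /\ (exists a2, R a2 b = cl_bot L)).

Definition up (g : B -> L) : A -> L :=
  fun a => infI (fun b => sw (sigma a b) (R a b) (g b)).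

Definition down (f : A -> L) : B -> L :=
  fun b => infI (fun a => nw (sigma a b) (R a b) (f a)).

Definition concept_pair := ((B -> L) * (A -> L))%type.

Definition is_concept (p : concept_pair) : Prop :=
  up p.1 = p.2 /\ down p.2 = p.1.

Definition cle (p q : concept_pair) : Prop := forall b, cl_le (p.1 b) (q.1 b).

Definition top_concept : concept_pair :=
  (fun _ => cl_top L, fun _ => cl_bot L).
Definition bot_concept : concept_pair :=
  (fun _ => cl_bot L, fun _ => cl_top L).

Definition concept_ACC : Prop :=
  forall c : nat -> concept_pair, (forall k, is_concept (c k)) ->
    (forall k, cle (c k) (c k.+1)) ->
    exists N, forall k, N <= k -> c k = c N.

Definition is_phi (phi : A -> L) (a : A) (x : L) : Prop :=
  phi a = x /\ forall a', a' <> a -> phi a' = cl_bot L.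

Definition meet_irreducible (c : concept_pair) : Prop :=
  is_concept c /\ c <> top_concept /\
  forall d e, is_concept d -> is_concept e ->
    is_glb cle is_concept (pair_set d e) c -> c = d \/ c = e.

Definition M_F (A' : A -> Prop) (c : concept_pair) : Prop :=
  meet_irreducible c /\
  exists a x phi, A' a /\ is_phi phi a x /\ c = (down phi, up (down phi)).

Definition M_g (A' : A -> Prop) (p : concept_pair) (c : concept_pair) : Prop :=
  M_F A' c /\ cle p c.

Definition separable (Y : A -> Prop) (X : B -> Prop) : Prop :=
  (exists a, Y a) /\ (exists a, ~ Y a) /\
  (exists b, X b) /\ (exists b, ~ X b) /\
  (exists a b, Y a /\ X b /\ R a b <> cl_bot L) /\
  (forall a b, Y a -> ~ X b -> R a b = cl_bot L) /\
  (forall a b, ~ Y a -> X b -> R a b = cl_bot L).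

Definition decomposition_into_independent_subcontexts
    (Lambda : Type) (Al : Lambda -> A -> Prop) (Bl : Lambda -> B -> Prop) :
    Prop :=
  inhabited Lambda /\
  (forall l, separable (Al l) (Bl l)) /\
  (forall a, exists l, Al l a) /\
  (forall l m a, Al l a -> Al m a -> l = m) /\
  (forall b, exists l, Bl l b) /\
  (forall l m b, Bl l b -> Bl m b -> l = m) /\
  (forall l a b, ((~ Al l a /\ Bl l b) \/ (Al l a /\ ~ Bl l b)) ->
     ~ has_zero_divisors (conj (sigma a b))).

Definition K_block (A' : A -> Prop) (c : concept_pair) : Prop :=
  (is_concept c /\ is_glb cle is_concept (M_g A' c) c) \/
  c = top_concept \/ c = bot_concept.

End Contexts.

From mathcomp Require Import ssreflect ssrfun ssrbool eqtype ssrnat fintype.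
From Stdlib Require Import Classical ClassicalEpsilon FunctionalExtensionality.

(* A concept <g,f> other than the top and the bottom one has g(b) <> bot for
   some b in some B_l.  Off the diagonal blocks R is bot and the conjunctors
   have no zero divisors, so f vanishes outside A_l; if g were also nonzero on
   some B_m with m <> l, f would vanish outside A_m as well, hence everywhere,
   making <g,f> the top concept.  So every such concept belongs to exactly one
   component l, and being in component l is inherited by every comparable
   nontrivial concept: the components plus top and bottom are independent
   convex sublattices covering the concept lattice.  They coincide with the
   K_l of the statement because, by the ascending chain condition and
   well-founded induction, every concept is the meet of the meet-irreducible
   concepts <phi_{a,x}^down, phi_{a,x}^down-up> above it, and for a concept of
   component l these all have a in A_l. *)

Set Implicit Arguments.
Unset Strict Implicit.
Unset Printing Implicit Defensive.

Section CompleteLattice.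
Variable L : complete_lattice.
Local Notation le := (@cl_le L).
Local Notation bot := (cl_bot L).
Local Notation top := (cl_top L).

Lemma cl_bot_le x : le bot x.
Proof. by apply: cl_inf_lb. Qed.

Lemma cl_le_top x : le x top.
Proof. by apply: cl_inf_glb. Qed.

Lemma cl_le_bot_eq x : le x bot -> x = bot.
Proof. by move=> h; apply: cl_le_antisym h (cl_bot_le _). Qed.

Lemma cl_le_nonbot x y : le x y -> x <> bot -> y <> bot.
Proof. by move=> h hx e; apply: hx; apply: cl_le_bot_eq; rewrite -e. Qed.

Lemma infI_lb (I : Type) (F : I -> L) i : le (infI F) (F i).
Proof. by apply: cl_inf_lb; exists i. Qed.

Lemma infI_glb (I : Type) (F : I -> L) y : (forall i, le y (F i)) -> le y (infI F).
Proof. by move=> h; apply: cl_inf_glb => x [i ->]. Qed.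

End CompleteLattice.

Section AdjointTriple.
Variables (L : complete_lattice) (amp sw nw : L -> L -> L).
Hypothesis adj : adjoint_triple amp sw nw.
Local Notation le := (@cl_le L).
Local Notation bot := (cl_bot L).
Local Notation top := (cl_top L).

Lemma le_sw x y z : le x (sw z y) <-> le (amp x y) z.
Proof. exact: proj1 (adj x y z). Qed.

Lemma le_nw x y z : le y (nw z x) <-> le (amp x y) z.
Proof. by split => /(proj2 (adj x y z)). Qed.

Lemma amp_bot_l y : amp bot y = bot.
Proof. by apply: cl_le_bot_eq; apply/le_sw; apply: cl_bot_le. Qed.

Lemma amp_bot_r x : amp x bot = bot.
Proof. by apply: cl_le_bot_eq; apply/le_nw; apply: cl_bot_le. Qed.

Lemma amp_monol x x' y : le x x' -> le (amp x y) (amp x' y).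
Proof.
move=> h; apply/le_sw; apply: cl_le_trans h _; apply/le_sw; exact: cl_le_refl.
Qed.

Lemma sw_bot_top : (forall x, amp x top = x) -> sw bot top = bot.
Proof.
by move=> unit; apply: cl_le_bot_eq; rewrite -[sw _ _]unit; apply/le_sw/cl_le_refl.
Qed.

Lemma nw_bot_top : (forall y, amp top y = y) -> nw bot top = bot.
Proof.
by move=> unit; apply: cl_le_bot_eq; rewrite -[nw _ _]unit; apply/le_nw/cl_le_refl.
Qed.

End AdjointTriple.

Section AscendingChainInduction.
Variables (T : Type) (M : T -> Prop) (le : T -> T -> Prop).
Hypothesis acc : forall c : nat -> T, (forall k, M (c k)) ->
  (forall k, le (c k) (c k.+1)) -> exists N, forall k, N <= k -> c k = c N.

Lemma ascending_chain_ind (P : T -> Prop) :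
  (forall x, M x -> (forall y, M y -> le x y -> y <> x -> P y) -> P x) ->
  forall x, M x -> P x.
Proof.
move=> IH x0 Mx0; apply: NNPP => nPx0.
pose Q x := M x /\ ~ P x.
have step (x : {x | Q x}) : exists y : {y | Q y},
    le (proj1_sig x) (proj1_sig y) /\ proj1_sig y <> proj1_sig x.
  case: x => x [Mx nPx] /=; apply: NNPP => none; apply: nPx.
  apply: IH => // y My lexy nyx; apply: NNPP => nPy.
  by apply: none; exists (exist _ y (conj My nPy)).
have [next hnext] := choice _ step.
pose c k := proj1_sig (iter k next (exist _ x0 (conj Mx0 nPx0))).
have Mc k : M (c k) by apply: (proj1 (proj2_sig (iter k next _))).
have lec k : le (c k) (c k.+1) by rewrite /c iterS; apply: (proj1 (hnext _)).
have [N hN] := acc Mc lec.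
by have := hN N.+1 (leqnSn N); rewrite /c iterS; apply: (proj2 (hnext _)).
Qed.

End AscendingChainInduction.

Section Concepts.
Variables (L : complete_lattice) (n : nat) (amp sw nw : 'I_n -> L -> L -> L).
Hypothesis adj : forall i, adjoint_triple (amp i) (sw i) (nw i).
Variables (A B : Type) (R : A -> B -> L) (sigma : A -> B -> 'I_n).

Local Notation le := (@cl_le L).
Local Notation bot := (cl_bot L).
Local Notation top := (cl_top L).
Local Notation up := (up sw R sigma).
Local Notation down := (down nw R sigma).
Local Notation concept := (is_concept sw nw R sigma).
Local Notation cle := (@cle L A B).
Local Notation TC := (top_concept L A B).
Local Notation BC := (bot_concept L A B).

Lemma le_down f y b :
  le y (down f b) <-> forall a, le (amp (sigma a b) (f a) y) (R a b).
Proof.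
split => [h a | h]; last by apply: infI_glb => a; apply/(le_nw (adj _))/h.
by apply/(le_nw (adj _)); apply: cl_le_trans h (infI_lb _ _).
Qed.

Lemma le_up g x a :
  le x (up g a) <-> forall b, le (amp (sigma a b) x (g b)) (R a b).
Proof.
split => [h b | h]; last by apply: infI_glb => b; apply/(le_sw (adj _))/h.
by apply/(le_sw (adj _)); apply: cl_le_trans h (infI_lb _ _).
Qed.

Lemma amp_down_le f a b : le (amp (sigma a b) (f a) (down f b)) (R a b).
Proof. exact: (proj1 (le_down f _ b) (cl_le_refl _)). Qed.

Lemma amp_up_le g a b : le (amp (sigma a b) (up g a) (g b)) (R a b).
Proof. exact: (proj1 (le_up g _ a) (cl_le_refl _)). Qed.

Lemma down_up_down f : down (up (down f)) = down f.
Proof.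
apply: functional_extensionality => b; apply: cl_le_antisym; apply/le_down => a.
- have f_le : le (f a) (up (down f) a) by apply/le_up => b'; apply: amp_down_le.
  exact: cl_le_trans (amp_monol (adj _) _ f_le) (amp_down_le _ a b).
- exact: amp_up_le.
Qed.

Lemma concept_down f : concept (down f, up (down f)).
Proof. by split => //=; apply: down_up_down. Qed.

Lemma concept_ext c d : concept c -> concept d -> c.1 = d.1 -> c = d.
Proof.
by case: c d => [g f] [g' f'] [/= <- _] [/= <- _] /= ->.
Qed.

Lemma cle_refl c : cle c c.
Proof. by move=> b; apply: cl_le_refl. Qed.

Lemma cle_trans c d e : cle c d -> cle d e -> cle c e.
Proof. by move=> h1 h2 b; apply: cl_le_trans (h1 b) (h2 b). Qed.

Lemma cle_anti c d : concept c -> concept d -> cle c d -> cle d c -> c = d.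
Proof.
move=> cc cd h1 h2; apply: concept_ext => //.
by apply: functional_extensionality => b; apply: cl_le_antisym.
Qed.

Lemma cle_TC c : cle c TC.
Proof. by move=> b; apply: cl_le_top. Qed.

Lemma BC_cle c : cle BC c.
Proof. by move=> b; apply: cl_bot_le. Qed.

Lemma down_bot : down (fun _ => bot) = fun _ => top.
Proof.
apply: functional_extensionality => b; apply: cl_le_antisym; first exact: cl_le_top.
by apply/le_down => a; rewrite (amp_bot_l (adj _)); apply: cl_bot_le.
Qed.

Lemma up_bot : up (fun _ => bot) = fun _ => top.
Proof.
apply: functional_extensionality => a; apply: cl_le_antisym; first exact: cl_le_top.
by apply/le_up => b; rewrite (amp_bot_r (adj _)); apply: cl_bot_le.
Qed.

Definition phi_at (a : A) (x : L) : A -> L :=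
  fun a' => if excluded_middle_informative (a' = a) then x else bot.

Definition phi_concept (a : A) (x : L) : concept_pair L A B :=
  (down (phi_at a x), up (down (phi_at a x))).

Lemma is_phi_at a x : is_phi (phi_at a x) a x.
Proof. by rewrite /phi_at; split => [|a' ?]; case: excluded_middle_informative. Qed.

Lemma le_down_phi_at a x y b :
  le y (down (phi_at a x) b) <-> le (amp (sigma a b) x y) (R a b).
Proof.
rewrite le_down; split => [/(_ a) | h a']; first by rewrite (proj1 (is_phi_at a x)).
have [e|na] := classic (a' = a); first by rewrite e (proj1 (is_phi_at a x)).
by rewrite (proj2 (is_phi_at a x) a' na) (amp_bot_l (adj _)); apply: cl_bot_le.
Qed.

Lemma concept_cle_phi_concept c a : concept c -> cle c (phi_concept a (c.2 a)).
Proof. by case=> _ cd b; rewrite /= -{1}cd; apply/le_down_phi_at/amp_down_le. Qed.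

Lemma cle_of_cle_phi_concepts c d :
  concept c -> (forall a, cle d (phi_concept a (c.2 a))) -> cle d c.
Proof. by case=> _ cd h b; rewrite -cd; apply/le_down => a; apply/le_down_phi_at/h. Qed.

Hypothesis unit : forall i (x : L), amp i x top = x /\ amp i top x = x.
Hypothesis norm : normalized_context R.

Lemma up_top : up (fun _ => top) = fun _ => bot.
Proof.
apply: functional_extensionality => a; apply: cl_le_bot_eq.
have [_ [b Rab]] := proj1 norm a.
apply: cl_le_trans (infI_lb _ b) _; rewrite Rab (sw_bot_top (adj _)).
  exact: cl_le_refl.
by move=> x; case: (unit (sigma a b) x).
Qed.

Lemma down_top : down (fun _ => top) = fun _ => bot.
Proof.
apply: functional_extensionality => b; apply: cl_le_bot_eq.
have [_ [a Rab]] := proj2 norm b.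
apply: cl_le_trans (infI_lb _ a) _; rewrite Rab (nw_bot_top (adj _)).
  exact: cl_le_refl.
by move=> x; case: (unit (sigma a b) x).
Qed.

Lemma concept_TC : concept TC.
Proof. by split; [apply: up_top | apply: down_bot]. Qed.

Lemma concept_BC : concept BC.
Proof. by split; [apply: up_bot | apply: down_top]. Qed.

Lemma TC_cle_eq c : concept c -> cle TC c -> c = TC.
Proof. by move=> cc h; apply: cle_anti cc concept_TC (cle_TC c) h. Qed.

Lemma cle_BC_eq c : concept c -> cle c BC -> c = BC.
Proof. by move=> cc h; apply: cle_anti cc concept_BC h (BC_cle c). Qed.

Lemma concept_nonbot c : concept c -> c <> BC -> exists b, c.1 b <> bot.
Proof.
move=> cc nBC; apply: NNPP => all_bot; apply: nBC; apply: cle_BC_eq => // b.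
have -> : c.1 b = bot by apply: NNPP => nb; apply: all_bot; exists b.
exact: cl_le_refl.
Qed.

Lemma concept_intent_bot c : concept c -> (forall a, c.2 a = bot) -> c = TC.
Proof.
move=> cc f_bot; case: (cc) => _ cd; apply: TC_cle_eq cc _.
have f_eq : c.2 = fun _ => bot by apply: functional_extensionality.
by move=> b; rewrite /= -cd f_eq down_bot; apply: cl_le_refl.
Qed.

Lemma not_meet_irreducible c : concept c -> c <> TC ->
  ~ meet_irreducible sw nw R sigma c ->
  exists d e, concept d /\ concept e /\ is_glb cle concept (pair_set d e) c /\
    d <> c /\ e <> c.
Proof.
move=> cc nTC nmi; apply: NNPP => none; apply: nmi; do 2!split => //.
move=> d e cd ce glb; apply: NNPP => neq; apply: none; exists d, e.
by do 3!split => //; split => e_eq; apply: neq; [left | right].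
Qed.

Section Representation.
Hypothesis acc : concept_ACC sw nw R sigma.
Local Notation M_g_all := (M_g sw nw R sigma (fun _ => True)).

(* Induction on the concepts above c: either c is meet-irreducible, and then
   it is the meet of the phi-concepts above it, or it is the meet of two
   concepts strictly above it. *)
Lemma cle_of_lb_M_g c : concept c -> forall d, concept d ->
  (forall m, M_g_all c m -> cle d m) -> cle d c.
Proof.
move: c; apply: (ascending_chain_ind acc) => c cc IH d cd lb.
have M_g_anti e m : cle c e -> M_g_all e m -> M_g_all c m.
  by move=> ce [mF em]; split => //; apply: cle_trans ce em.
have [?|notM] := classic (M_g_all c c); first exact: lb.
have [->|nTC] := classic (c = TC); first exact: cle_TC.
have [mi|nmi] := classic (meet_irreducible sw nw R sigma c).
  apply: cle_of_cle_phi_concepts => // a; have ce := concept_cle_phi_concept a cc.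
  have ne : phi_concept a (c.2 a) <> c.
    move=> e_eq; apply: notM; split; last exact: cle_refl.
    split=> //; exists a, (c.2 a), (phi_at a (c.2 a)).
    by split=> //; split; [apply: is_phi_at | exact: esym e_eq].
  exact: (IH _ (concept_down _) ce ne d cd (fun m hm => lb m (M_g_anti _ m ce hm))).
have [e1 [e2 [ce1 [ce2 [[_ [e_lb e_glb]] [ne1 ne2]]]]]] := not_meet_irreducible cc nTC nmi.
have le1 : cle c e1 by apply: e_lb; left.
have le2 : cle c e2 by apply: e_lb; right.
apply: e_glb => // _ [->|->].
  exact: (IH e1 ce1 le1 ne1 d cd (fun m hm => lb m (M_g_anti _ m le1 hm))).
exact: (IH e2 ce2 le2 ne2 d cd (fun m hm => lb m (M_g_anti _ m le2 hm))).
Qed.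

End Representation.

Section Decomposition.
Variables (Lambda : Type) (Al : Lambda -> A -> Prop) (Bl : Lambda -> B -> Prop).
Hypothesis Lambda_inh : inhabited Lambda.
Hypothesis sep : forall l, separable R (Al l) (Bl l).
Hypothesis Al_cover : forall a, exists l, Al l a.
Hypothesis Al_uniq : forall l m a, Al l a -> Al m a -> l = m.
Hypothesis Bl_cover : forall b, exists l, Bl l b.
Hypothesis Bl_uniq : forall l m b, Bl l b -> Bl m b -> l = m.
Hypothesis off_block_nzd : forall l a b,
  (~ Al l a /\ Bl l b) \/ (Al l a /\ ~ Bl l b) ->
  ~ has_zero_divisors (amp (sigma a b)).

Local Notation K l := (K_block sw nw R sigma (Al l)).

Lemma off_block_amp_le l a b x y :
  (~ Al l a /\ Bl l b) \/ (Al l a /\ ~ Bl l b) ->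
  le (amp (sigma a b) x y) (R a b) -> x = bot \/ y = bot.
Proof.
move=> off; have [_ [_ [_ [_ [_ [RA RB]]]]]] := sep l.
have -> : R a b = bot by case: off => [[]|[]]; [apply: RB | apply: RA].
move=> /cl_le_bot_eq amp_bot; apply: NNPP => nz; apply: (off_block_nzd off).
by exists x, y; split; [|split] => // ?; apply: nz; [left | right].
Qed.

Lemma intent_bot_off_block c l a b : concept c -> c.1 b <> bot -> Bl l b ->
  ~ Al l a -> c.2 a = bot.
Proof.
case=> cu _ gb Bb nAa; have := amp_up_le c.1 a b; rewrite cu.
by case/(off_block_amp_le (or_introl (conj nAa Bb))).
Qed.

Definition in_component l (c : concept_pair L A B) :=
  concept c /\ c <> TC /\ exists b, Bl l b /\ c.1 b <> bot.

Lemma in_component_extent l c b : in_component l c -> c.1 b <> bot -> Bl l b.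
Proof.
case=> cc [nTC [b1 [Bb1 gb1]]] gb; have [m Bb] := Bl_cover b.
have [<-|nml] := classic (m = l); first by [].
case: nTC; apply: concept_intent_bot => // a; have [k Aa] := Al_cover a.
have [ekl|nkl] := classic (k = l).
  by subst k; apply: (intent_bot_off_block cc gb Bb) => Am; apply: nml; apply: Al_uniq Am Aa.
by apply: (intent_bot_off_block cc gb1 Bb1) => Al'; apply: nkl; apply: Al_uniq Aa Al'.
Qed.

Lemma in_component_uniq l m c : in_component l c -> in_component m c -> l = m.
Proof.
by move=> cl cm; case: (cl) => _ [_ [b [Bb gb]]]; apply: Bl_uniq Bb (in_component_extent cm gb).
Qed.

Lemma in_component_neq_BC l c : in_component l c -> c <> BC.
Proof. by case=> _ [_ [b [_ gb]]] e; apply: gb; rewrite e. Qed.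

Lemma in_component_cle l x z : in_component l x -> concept z -> z <> TC -> z <> BC ->
  cle z x \/ cle x z -> in_component l z.
Proof.
move=> cx cz nTC nBC cmp; do 2!split => //; case: cmp => h.
  have [b gb] := concept_nonbot cz nBC.
  by exists b; split => //; apply: (in_component_extent cx); apply: cl_le_nonbot (h b) gb.
by case: cx => _ [_ [b [Bb gb]]]; exists b; split => //; apply: cl_le_nonbot (h b) gb.
Qed.

Lemma concept_in_component c : concept c -> c <> TC -> c <> BC ->
  exists l, in_component l c.
Proof.
move=> cc nTC nBC; have [b gb] := concept_nonbot cc nBC.
by have [l Bb] := Bl_cover b; exists l; split => //; split => //; exists b.
Qed.

Lemma phi_concept_extent l phi a x b : is_phi phi a x -> Al l a ->
  (down phi, up (down phi)) <> TC -> down phi b <> bot -> Bl l b.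
Proof.
move=> [phi_a phi_off] Aa nTC gb; have [x_bot|nx] := classic (x = bot).
  have phi_eq : phi = fun _ => bot.
    apply: functional_extensionality => a'; have [e|na] := classic (a' = a).
      by rewrite e phi_a.
    exact: phi_off.
  by case: nTC; rewrite phi_eq down_bot up_top.
apply: NNPP => nBb; have := amp_down_le phi a b; rewrite phi_a.
by case/(off_block_amp_le (or_intror (conj Aa nBb))).
Qed.

Lemma in_component_exists l : exists c, in_component l c.
Proof.
have [[a Aa] [_ [_ [_ [_ [RA _]]]]]] := sep l.
have [[b1 Rab1] [b2 Rab2]] := proj1 norm a.
have amp_top i x : amp i top x = x by case: (unit i x).
have le1 : le (R a b1) ((phi_concept a top).1 b1).
  by apply/le_down_phi_at; rewrite amp_top; apply: cl_le_refl.
have eq2 : (phi_concept a top).1 b2 = bot.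
  apply: cl_le_bot_eq; rewrite -Rab2 -[X in le X _](amp_top (sigma a b2)).
  exact/le_down_phi_at/cl_le_refl.
exists (phi_concept a top); split; first exact: concept_down.
split.
  move=> eTC; apply: Rab1; apply: cl_le_bot_eq; apply: cl_le_trans le1 _.
  by rewrite -eq2 eTC; apply: cl_le_refl.
exists b1; split; last exact: cl_le_nonbot le1 Rab1.
by apply: NNPP => nB; apply: Rab1; apply: RA.
Qed.

Lemma K_TC l : K l TC.
Proof. by right; left. Qed.

Lemma K_BC l : K l BC.
Proof. by right; right. Qed.

Lemma K_concept l c : K l c -> concept c.
Proof. by case=> [[]|[->|->]] //; [apply: concept_TC | apply: concept_BC]. Qed.

Lemma K_cases l c : K l c -> c = TC \/ c = BC \/ in_component l c.
Proof.
case=> [[cc [_ [_ glb]]]|[->|->]]; [|by left|by right; left].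
have [->|nTC] := classic (c = TC); first by left.
have [->|nBC] := classic (c = BC); first by right; left.
right; right; do 2!split => //; have [b gb] := concept_nonbot cc nBC.
have [[m [[[_ [mTC _]] [a [x [phi [Aa [phi_ax em]]]]]] cm]]|none] :=
  classic (exists m, M_g sw nw R sigma (Al l) c m).
  exists b; split => //; rewrite em in mTC cm.
  exact: (phi_concept_extent phi_ax Aa mTC (cl_le_nonbot (cm b) gb)).
case: nTC; apply: TC_cle_eq => //; apply: glb; first exact: concept_TC.
by move=> m hm; case: none; exists m.
Qed.

Hypothesis acc : concept_ACC sw nw R sigma.

Lemma in_component_K l c : in_component l c -> K l c.
Proof.
move=> cl; case: (cl) => cc [_ [b [Bb gb]]]; left; do 2!split => //.
split => [m [] //|d cd lb]; apply: cle_of_lb_M_g => // m [[mi [a [x [phi [_ [phi_ax em]]]]]] cm].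
apply: lb; split => //; split => //; exists a, x, phi; split => //.
have [k Aa] := Al_cover a; suff <- : k = l by [].
apply: Bl_uniq Bb; have [_ [mTC _]] := mi; rewrite em in mTC cm.
exact: (phi_concept_extent phi_ax Aa mTC (cl_le_nonbot (cm b) gb)).
Qed.

Lemma K_cle l x z : in_component l x -> concept z -> cle z x \/ cle x z -> K l z.
Proof.
move=> cx cz cmp; have [->|nTC] := classic (z = TC); first exact: K_TC.
have [->|nBC] := classic (z = BC); first exact: K_BC.
exact/in_component_K/(in_component_cle cx cz nTC nBC cmp).
Qed.

Lemma K_meet_closed l x y z : K l x -> K l y ->
  is_glb cle concept (pair_set x y) z -> K l z.
Proof.
move=> Kx Ky [cz [z_lb z_glb]].
have zx : cle z x by apply: z_lb; left.
have zy : cle z y by apply: z_lb; right.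
have [->|nBC] := classic (z = BC); first exact: K_BC.
case: (K_cases Kx) => [ex|[ex|cx]]; last exact: K_cle cx cz (or_introl zx).
- case: (K_cases Ky) => [ey|[ey|cy]]; last exact: K_cle cy cz (or_introl zy).
  + suff -> : z = TC by apply: K_TC.
    apply: TC_cle_eq cz (z_glb _ concept_TC _) => // _ [->|->]; rewrite ?ex ?ey; exact: cle_refl.
  + by case: nBC; apply: cle_BC_eq => //; rewrite -ey.
- by case: nBC; apply: cle_BC_eq => //; rewrite -ex.
Qed.

Lemma K_join_closed l x y z : K l x -> K l y ->
  is_lub cle concept (pair_set x y) z -> K l z.
Proof.
move=> Kx Ky [cz [z_ub z_lub]].
have xz : cle x z by apply: z_ub; left.
have yz : cle y z by apply: z_ub; right.
have [->|nTC] := classic (z = TC); first exact: K_TC.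
case: (K_cases Kx) => [ex|[ex|cx]]; last exact: K_cle cx cz (or_intror xz).
- by case: nTC; apply: TC_cle_eq => //; rewrite -ex.
- case: (K_cases Ky) => [ey|[ey|cy]]; last exact: K_cle cy cz (or_intror yz).
  + by case: nTC; apply: TC_cle_eq => //; rewrite -ey.
  + suff -> : z = BC by apply: K_BC.
    apply: cle_BC_eq cz (z_lub _ concept_BC _) => // _ [->|->]; rewrite ?ex ?ey; exact: cle_refl.
Qed.

Lemma K_is_block l : block cle concept BC TC (K l).
Proof.
split; first by split; [apply: K_concept | split; [apply: K_meet_closed | apply: K_join_closed]].
split.
  have [_ [[a nAa] _]] := sep l; have [m Aa] := Al_cover a.
  have [c cm] := in_component_exists m.
  exists c; split; first by case: cm.
  case/K_cases => [eTC|[eBC|cl]]; first by case: cm => _ [].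
    exact: in_component_neq_BC cm eBC.
  by apply: nAa; rewrite -(in_component_uniq cm cl).
split.
  have [c cl] := in_component_exists l.
  exists c; split; first exact: in_component_K.
  by split; [apply: in_component_neq_BC cl | case: cl => _ []].
move=> k Kk nBC nTC x cx cmp _ _; case: (K_cases Kk) => [//|[//|ck]].
by apply: K_cle ck cx _; case: cmp; [right | left].
Qed.

Lemma K_independent l m : l <> m -> independent_blocks BC TC (K l) (K m).
Proof.
move=> nlm c /K_cases[->|[->|cl]]; [by right | by left |].
by case/K_cases => [->|[->|cm]]; [right | left | case: nlm; apply: in_component_uniq cl cm].
Qed.

Lemma K_cover c : concept c <-> exists l, K l c.
Proof.
split=> [cc|[l /K_concept //]]; have [l0] := Lambda_inh.
have [->|nTC] := classic (c = TC); first by exists l0; apply: K_TC.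
have [->|nBC] := classic (c = BC); first by exists l0; apply: K_BC.
by have [l cl] := concept_in_component cc nTC nBC; exists l; apply: in_component_K.
Qed.

End Decomposition.

End Concepts.

Theorem theorem32
  (L : complete_lattice) (n : nat)
  (conj sw nw : 'I_n -> L -> L -> L)
  (Hadj : forall i, adjoint_triple (conj i) (sw i) (nw i))
  (Hunit : forall i (x : L), conj i x (cl_top L) = x /\ conj i (cl_top L) x = x)
  (A B : Type) (R : A -> B -> L) (sigma : A -> B -> 'I_n)
  (HA : inhabited A) (HB : inhabited B)
  (Hnorm : normalized_context R)
  (HACC : concept_ACC sw nw R sigma)
  (Lambda : Type) (Al : Lambda -> A -> Prop) (Bl : Lambda -> B -> Prop)
  (Hdec : decomposition_into_independent_subcontexts conj R sigma Al Bl) :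
  decomposition_into_independent_blocks
    (cle (L := L) (A := A) (B := B)) (is_concept sw nw R sigma)
    (bot_concept L A B) (top_concept L A B)
    (fun l => K_block sw nw R sigma (Al l)).
Proof.
have [inh [sep [A_cover [A_uniq [B_cover [B_uniq nzd]]]]]] := Hdec.
split; [|split].
- by move=> l; apply: K_is_block.
- by move=> l m; apply: K_independent.
- by move=> c; apply: K_cover.
Qed.
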